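(* Let $m\ge 1$ and let $s$ be a spline of degree $m$ with knots $\alpha_0<\alpha_1<\dots<\alpha_n$. Then there exists a compactly supported spline $\bar s$ of degree $m$ such that $\bar s$ coincides with $s$ on $[\alpha_0,\alpha_n]$ and the set of knots of $\bar s$ is contained in $$\{\alpha_0-m,\alpha_0-m+1,\dots,\alpha_0-1\}\cup\{\alpha_0,\alpha_1,\dots,\alpha_n\}\cup\{\alpha_n+1,\dots,\alpha_n+m\}.$$
   Context: A spline of degree $m$ (with finitely many knots) is a function $s\in C^{m-1}(\mathbb{R},\mathbb{R})$ for which there are finitely many points such that on each interval between consecutive such points, and on the two unbounded complementary intervals, $s$ coincides with a polynomial of degree at most $m$. The knots of $s$ are the points at which $s$ is not $C^\infty$. *)

From Stdlib Require Import Reals List.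
From Coquelicot Require Import Coquelicot.
Open Scope R_scope.

Definition Ck (k : nat) (f : R -> R) : Prop :=
  forall j : nat, (j <= k)%nat -> forall x : R,
    ex_derive_n f j x /\ continuous (Derive_n f j) x.

Definition is_poly_le (m : nat) (p : R -> R) : Prop :=
  exists c : nat -> R, forall x : R, p x = sum_f_R0 (fun i => c i * x ^ i) m.

Definition spline (m : nat) (s : R -> R) : Prop :=
  Ck (m - 1) s /\
  exists pts : list R,
    forall a b : Rbar, Rbar_lt a b ->
      (forall t, In t pts -> ~ (Rbar_lt a t /\ Rbar_lt t b)) ->
      exists p : R -> R, is_poly_le m p /\
        forall x : R, Rbar_lt a x -> Rbar_lt x b -> s x = p x.

Definition smooth_at (f : R -> R) (x : R) : Prop :=
  exists eps : R, 0 < eps /\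
    forall (j : nat) (y : R), Rabs (y - x) < eps -> ex_derive_n f j y.

Definition knot (f : R -> R) (x : R) : Prop := ~ smooth_at f x.

Definition compactly_supported (f : R -> R) : Prop :=
  exists M : R, forall x : R, M < Rabs x -> f x = 0.

(* Cut the spline off to the right of alpha_n: beyond alpha_n continue it by its
   polynomial piece p just right of alpha_n, minus a combination of the truncated
   powers (x - alpha_n - j)_+^m, j = 0..m, whose coefficients (a Vandermonde
   system) make it reproduce p. That combination is C^(m-1), vanishes left of
   alpha_n and equals p right of alpha_n + m, so the cut spline agrees with s up
   to alpha_n, vanishes from alpha_n + m on, and acquires only the knots
   alpha_n + 1, ..., alpha_n + m. Cutting off left of alpha_0 is the mirror image
   under x |-> -x. *)

From Stdlib Require Import Reals List Lia Lra Classical FunctionalExtensionality.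
From Coquelicot Require Import Coquelicot.
Open Scope R_scope.

Lemma locally_lt (x t : R) : x < t -> locally x (fun y => y < t).
Proof. intros Hx. now apply open_lt. Qed.

Lemma locally_gt (x t : R) : t < x -> locally x (fun y => t < y).
Proof. intros Hx. now apply open_gt. Qed.

Lemma locally_comp_opp (x : R) (P : R -> Prop) :
  locally (- x) P -> locally x (fun y => P (- y)).
Proof.
  apply (continuous_opp (fun y : R => y) x (continuous_id x)).
Qed.

(** * Functions of class C^k and smoothness *)

Lemma Ck_ex_derive_n k f j x : Ck k f -> (j <= k)%nat -> ex_derive_n f j x.
Proof. intros H Hj. apply (H j Hj x). Qed.

Lemma Ck_plus k f g : Ck k f -> Ck k g -> Ck k (fun x => f x + g x).
Proof.
  intros Hf Hg j Hj x.
  assert (Ef : forall y i, (i <= j)%nat -> ex_derive_n f i y)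
    by (intros y i Hi; apply (Ck_ex_derive_n k); auto; lia).
  assert (Eg : forall y i, (i <= j)%nat -> ex_derive_n g i y)
    by (intros y i Hi; apply (Ck_ex_derive_n k); auto; lia).
  split.
  - apply ex_derive_n_plus; apply filter_forall; auto.
  - apply continuous_ext with (fun y => Derive_n f j y + Derive_n g j y).
    + intros y. symmetry. apply Derive_n_plus; apply filter_forall; auto.
    + apply (continuous_plus (Derive_n f j) (Derive_n g j)); [apply Hf | apply Hg]; lia.
Qed.

Lemma Ck_scal k a f : Ck k f -> Ck k (fun x => a * f x).
Proof.
  intros Hf j Hj x. split.
  - apply ex_derive_n_scal_l, Hf, Hj.
  - apply continuous_ext with (fun y => a * Derive_n f j y).
    + intros y. symmetry. apply Derive_n_scal_l.
    + apply (continuous_mult (fun _ => a) (Derive_n f j)).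
      * apply continuous_const.
      * apply Hf, Hj.
Qed.

Lemma Ck_comp_opp k f : Ck k f -> Ck k (fun x => f (- x)).
Proof.
  intros Hf j Hj x.
  assert (Ef : forall y i, (i <= j)%nat -> ex_derive_n f i y)
    by (intros y i Hi; apply (Ck_ex_derive_n k); auto; lia).
  split.
  - apply ex_derive_n_comp_opp, filter_forall; auto.
  - apply continuous_ext with (fun y => (-1) ^ j * Derive_n f j (- y)).
    + intros y. symmetry. apply Derive_n_comp_opp, filter_forall; auto.
    + apply (continuous_mult (fun _ => (-1) ^ j) (fun y => Derive_n f j (- y))).
      * apply continuous_const.
      * apply (continuous_comp Ropp (Derive_n f j)).
        -- apply (continuous_opp (fun y : R => y)), continuous_id.
        -- apply Hf, Hj.
Qed.

Lemma Ck_locally k f :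
  (forall x, exists g, Ck k g /\ locally x (fun y => g y = f y)) -> Ck k f.
Proof.
  intros H j Hj x. destruct (H x) as [g [Hg Hfg]]. split.
  - apply ex_derive_n_ext_loc with g; [exact Hfg | apply Hg, Hj].
  - apply continuous_ext_loc with (Derive_n g j).
    + apply (filter_imp _ _ (fun y Hy => Derive_n_ext_loc g f j y Hy)).
      apply locally_locally, Hfg.
    + apply Hg, Hj.
Qed.

Lemma Ck_of_ex_derive_n k f : (forall j x, ex_derive_n f j x) -> Ck k f.
Proof.
  intros H j _ x. split; [apply H |].
  apply (@ex_derive_continuous R_AbsRing R_NormedModule), (H (S j)).
Qed.

Lemma smooth_at_locally f x :
  smooth_at f x <-> locally x (fun y => forall j, ex_derive_n f j y).
Proof.
  split.
  - intros [e [He H]]. exists (mkposreal e He). intros y Hy j. now apply H.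
  - intros [e H]. exists e. split; [apply cond_pos |]. intros j y Hy. now apply H.
Qed.

Lemma smooth_at_ext_loc f g x :
  locally x (fun y => g y = f y) -> smooth_at g x -> smooth_at f x.
Proof.
  rewrite !smooth_at_locally. intros Hfg Hg.
  apply (filter_imp (fun y => locally y (fun z => g z = f z) /\ forall j, ex_derive_n g j y)).
  - intros y [Hy Hgy] j. now apply ex_derive_n_ext_loc with g.
  - apply filter_and; [apply locally_locally |]; assumption.
Qed.

Lemma smooth_at_of_ex_derive_n f x : (forall j y, ex_derive_n f j y) -> smooth_at f x.
Proof. intros H. apply smooth_at_locally, filter_forall. intros y j. apply H. Qed.

Lemma smooth_at_plus f g x :
  smooth_at f x -> smooth_at g x -> smooth_at (fun y => f y + g y) x.
Proof.
  rewrite !smooth_at_locally. intros Hf Hg.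
  apply (filter_imp (fun y => locally y (fun z => forall j, ex_derive_n f j z) /\
                              locally y (fun z => forall j, ex_derive_n g j z))).
  - intros y [Hfy Hgy] j.
    apply ex_derive_n_plus; [apply (filter_imp _ _ (fun z H k _ => H k) Hfy)
                            | apply (filter_imp _ _ (fun z H k _ => H k) Hgy)].
  - apply filter_and; apply locally_locally; assumption.
Qed.

Lemma smooth_at_scal a f x : smooth_at f x -> smooth_at (fun y => a * f y) x.
Proof.
  rewrite !smooth_at_locally. apply filter_imp. intros y H j.
  now apply ex_derive_n_scal_l.
Qed.

Lemma smooth_at_minus f g x :
  smooth_at f x -> smooth_at g x -> smooth_at (fun y => f y - g y) x.
Proof.
  intros Hf Hg. apply smooth_at_ext_loc with (fun y => f y + (-1) * g y).
  - apply filter_forall. intros y. ring.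
  - now apply smooth_at_plus, smooth_at_scal.
Qed.

Lemma smooth_at_sum (F : nat -> R -> R) N x :
  (forall j, (j <= N)%nat -> smooth_at (F j) x) ->
  smooth_at (fun y => sum_f_R0 (fun j => F j y) N) x.
Proof.
  induction N as [|N IH]; intros H.
  - apply H. lia.
  - apply smooth_at_plus; [apply IH; intros j Hj |]; apply H; lia.
Qed.

Lemma smooth_at_comp_opp f x : smooth_at f (- x) -> smooth_at (fun y => f (- y)) x.
Proof.
  rewrite !smooth_at_locally. intros H.
  apply (filter_imp _ _ (fun y Hy j => ex_derive_n_comp_opp f j y
           (filter_imp _ _ (fun z Hz k _ => Hz k) Hy))).
  apply (locally_comp_opp x (fun z => locally z (fun w => forall j, ex_derive_n f j w))).
  now apply locally_locally.
Qed.

(** * Polynomials and splines *)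

Lemma is_poly_le_const0 m : is_poly_le m (fun _ => 0).
Proof.
  exists (fun _ => 0). intros x. rewrite (sum_eq _ (fun _ => 0)), sum_cte; [ring | intros; ring].
Qed.

Lemma is_poly_le_plus m p q :
  is_poly_le m p -> is_poly_le m q -> is_poly_le m (fun x => p x + q x).
Proof.
  intros [c Hc] [d Hd]. exists (fun i => c i + d i). intros x.
  rewrite Hc, Hd, <- plus_sum. apply sum_eq. intros; ring.
Qed.

Lemma is_poly_le_scal m a p : is_poly_le m p -> is_poly_le m (fun x => a * p x).
Proof.
  intros [c Hc]. exists (fun i => a * c i). intros x.
  rewrite Hc, scal_sum. apply sum_eq. intros; ring.
Qed.

Lemma is_poly_le_shifted_pow m t : is_poly_le m (fun x => (x - t) ^ m).
Proof.
  exists (fun i => Binomial.C m i * (- t) ^ (m - i)). intros x.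
  unfold Rminus. rewrite binomial. apply sum_eq. intros; ring.
Qed.

Lemma is_poly_le_comp_opp m p : is_poly_le m p -> is_poly_le m (fun x => p (- x)).
Proof.
  intros [c Hc]. exists (fun i => c i * (-1) ^ i). intros x. rewrite Hc.
  apply sum_eq. intros i _. replace (- x) with ((-1) * x) by ring.
  rewrite Rpow_mult_distr. ring.
Qed.

Lemma ex_derive_n_poly m p j x : is_poly_le m p -> ex_derive_n p j x.
Proof.
  intros [c Hc]. apply ex_derive_n_ext with (fun y => sum_f_R0 (fun i => c i * y ^ i) m).
  { intros y. now rewrite Hc. }
  clear Hc. revert j x. induction m as [|m IH]; intros j x.
  - apply ex_derive_n_scal_l, ex_derive_n_pow.
  - apply ex_derive_n_plus; apply filter_forall; intros y k _.
    + apply IH.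
    + apply ex_derive_n_scal_l, ex_derive_n_pow.
Qed.
Lemma smooth_at_poly m p x : is_poly_le m p -> smooth_at p x.
Proof. intros Hp. apply smooth_at_of_ex_derive_n. intros j y. now apply (ex_derive_n_poly m). Qed.

Definition piecewise_poly (m : nat) (pts : list R) (f : R -> R) : Prop :=
  forall a b : Rbar, Rbar_lt a b ->
    (forall t, In t pts -> ~ (Rbar_lt a t /\ Rbar_lt t b)) ->
    exists p : R -> R, is_poly_le m p /\
      forall x : R, Rbar_lt a x -> Rbar_lt x b -> f x = p x.

Lemma Rbar_interval_side (a b : Rbar) (t : R) :
  ~ (Rbar_lt a t /\ Rbar_lt t b) ->
  (forall x : R, Rbar_lt x b -> x < t) \/ (forall x : R, Rbar_lt a x -> t < x).
Proof.
  intros H. destruct (classic (Rbar_lt a t)) as [Hat | Hat].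
  - left. intros x Hx.
    assert (Hbt : Rbar_le b t) by (apply Rbar_not_lt_le; tauto).
    exact (Rbar_lt_le_trans x b t Hx Hbt).
  - right. intros x Hx. apply Rbar_not_lt_le in Hat.
    exact (Rbar_le_lt_trans t a x Hat Hx).
Qed.

Lemma piecewise_poly_app_l m pts pts' f :
  piecewise_poly m pts f -> piecewise_poly m (pts ++ pts') f.
Proof.
  intros H a b Hab Hpts. apply H; [exact Hab |].
  intros t Ht. apply Hpts, in_or_app. now left.
Qed.

Lemma piecewise_poly_app_r m pts pts' f :
  piecewise_poly m pts' f -> piecewise_poly m (pts ++ pts') f.
Proof.
  intros H a b Hab Hpts. apply H; [exact Hab |].
  intros t Ht. apply Hpts, in_or_app. now right.
Qed.

Lemma spline_ext m f g : (forall x, f x = g x) -> spline m f -> spline m g.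
Proof.
  intros E H. replace g with f by (now apply functional_extensionality). exact H.
Qed.

Lemma spline_poly m p : is_poly_le m p -> spline m p.
Proof.
  intros Hp. split.
  - apply Ck_of_ex_derive_n. intros j x. now apply (ex_derive_n_poly m).
  - exists nil. intros a b _ _. exists p. split; auto.
Qed.

Lemma spline_plus m f g : spline m f -> spline m g -> spline m (fun x => f x + g x).
Proof.
  intros [Hf [ptsf Hpf]] [Hg [ptsg Hpg]]. split; [now apply Ck_plus |].
  exists (ptsf ++ ptsg). intros a b Hab Hpts.
  destruct (piecewise_poly_app_l m ptsf ptsg f Hpf a b Hab Hpts) as [p [Hp Hfp]].
  destruct (piecewise_poly_app_r m ptsf ptsg g Hpg a b Hab Hpts) as [q [Hq Hgq]].
  exists (fun x => p x + q x). split; [now apply is_poly_le_plus |].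
  intros x Hax Hxb. now rewrite Hfp, Hgq.
Qed.

Lemma spline_scal m c f : spline m f -> spline m (fun x => c * f x).
Proof.
  intros [Hf [pts Hpf]]. split; [now apply Ck_scal |].
  exists pts. intros a b Hab Hpts. destruct (Hpf a b Hab Hpts) as [p [Hp Hfp]].
  exists (fun x => c * p x). split; [now apply is_poly_le_scal |].
  intros x Hax Hxb. now rewrite Hfp.
Qed.

Lemma spline_minus m f g : spline m f -> spline m g -> spline m (fun x => f x - g x).
Proof.
  intros Hf Hg. apply spline_ext with (fun x => f x + (-1) * g x); [intros; ring |].
  now apply spline_plus, spline_scal.
Qed.

Lemma spline_sum m (F : nat -> R -> R) N :
  (forall j, (j <= N)%nat -> spline m (F j)) ->
  spline m (fun x => sum_f_R0 (fun j => F j x) N).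
Proof.
  induction N as [|N IH]; intros H.
  - apply H. lia.
  - apply spline_plus; [apply IH; intros j Hj |]; apply H; lia.
Qed.

Lemma spline_comp_opp m f : spline m f -> spline m (fun x => f (- x)).
Proof.
  intros [Hf [pts Hpf]]. split; [now apply Ck_comp_opp |].
  exists (map Ropp pts). intros a b Hab Hpts.
  destruct (Hpf (Rbar_opp b) (Rbar_opp a)) as [p [Hp Hfp]].
  - now apply Rbar_opp_lt.
  - intros t Ht [H1 H2]. apply (Hpts (- t)); [now apply in_map |].
    destruct a, b; simpl in *; split; auto; lra.
  - exists (fun x => p (- x)). split; [now apply is_poly_le_comp_opp |].
    intros x Hax Hxb. apply Hfp; destruct a, b; simpl in *; auto; lra.
Qed.

Definition glue (a : R) (f g : R -> R) (x : R) : R := if Rle_dec x a then f x else g x.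

Lemma glue_le a f g x : x <= a -> glue a f g x = f x.
Proof. intros Hx. unfold glue. now destruct (Rle_dec x a). Qed.

Lemma glue_gt a f g x : a < x -> glue a f g x = g x.
Proof. intros Hx. unfold glue. destruct (Rle_dec x a); [lra | reflexivity]. Qed.

Lemma glue_locally_lt a f g x : x < a -> locally x (fun y => f y = glue a f g y).
Proof.
  intros Hx. apply (filter_imp _ _ (fun y Hy => eq_sym (glue_le a f g y (Rlt_le _ _ Hy)))).
  now apply locally_lt.
Qed.

Lemma glue_locally_gt a f g x : a < x -> locally x (fun y => g y = glue a f g y).
Proof.
  intros Hx. apply (filter_imp _ _ (fun y Hy => eq_sym (glue_gt a f g y Hy))).
  now apply locally_gt.
Qed.

Lemma smooth_at_glue_lt a f g x : x < a -> smooth_at f x -> smooth_at (glue a f g) x.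
Proof. intros Hx. apply smooth_at_ext_loc, glue_locally_lt, Hx. Qed.

Lemma smooth_at_glue_gt a f g x : a < x -> smooth_at g x -> smooth_at (glue a f g) x.
Proof. intros Hx. apply smooth_at_ext_loc, glue_locally_gt, Hx. Qed.

Section Glue.

Variables (m : nat) (a e : R) (f g : R -> R).
Hypothesis e_pos : 0 < e.
Hypothesis f_eq_g : forall x, a < x < a + e -> f x = g x.

Lemma glue_eq_before : forall x, x < a + e -> glue a f g x = f x.
Proof.
  intros x Hx. destruct (Rle_dec x a) as [Hxa | Hxa].
  - now apply glue_le.
  - rewrite glue_gt by lra. symmetry. apply f_eq_g. lra.
Qed.

Lemma spline_glue : spline m f -> spline m g -> spline m (glue a f g).
Proof.
  intros [Hf [ptsf Hpf]] [Hg [ptsg Hpg]]. split.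
  - apply Ck_locally. intros x. destruct (Rlt_dec x (a + e)) as [Hx | Hx].
    + exists f. split; [exact Hf |].
      apply (filter_imp _ _ (fun y Hy => eq_sym (glue_eq_before y Hy))).
      now apply locally_lt.
    + exists g. split; [exact Hg |]. apply glue_locally_gt. lra.
  - exists (a :: ptsf ++ ptsg). intros lo hi Hlh Hpts.
    assert (Hrest : forall t, In t (ptsf ++ ptsg) -> ~ (Rbar_lt lo t /\ Rbar_lt t hi))
      by (intros t Ht; apply Hpts; now right).
    destruct (Rbar_interval_side lo hi a (Hpts a (or_introl eq_refl))) as [Hleft | Hright].
    + destruct (piecewise_poly_app_l m ptsf ptsg f Hpf lo hi Hlh Hrest) as [p [Hp Hfp]].
      exists p. split; [exact Hp |]. intros x Hlo Hhi.
      rewrite glue_le by (apply Rlt_le, Hleft, Hhi). now apply Hfp.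
    + destruct (piecewise_poly_app_r m ptsf ptsg g Hpg lo hi Hlh Hrest) as [p [Hp Hgp]].
      exists p. split; [exact Hp |]. intros x Hlo Hhi.
      rewrite glue_gt by (apply Hright, Hlo). now apply Hgp.
Qed.

End Glue.

Lemma list_gap_right (l : list R) (a : R) :
  exists e, 0 < e /\ forall t, In t l -> ~ (a < t < a + e).
Proof.
  induction l as [|t0 l [e [He H]]].
  - exists 1. split; [lra | intros t []].
  - destruct (Rle_dec t0 a) as [Ht0 | Ht0].
    + exists e. split; [exact He |]. intros t [<- | Ht]; [lra | now apply H].
    + exists (Rmin e (t0 - a)). split; [apply Rmin_pos; lra |].
      assert (Hmin1 := Rmin_l e (t0 - a)). assert (Hmin2 := Rmin_r e (t0 - a)).
      intros t [<- | Ht]; [lra |]. intros Hat. apply (H t Ht). lra.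
Qed.

Lemma spline_right_piece m f a :
  spline m f -> exists e p, 0 < e /\ is_poly_le m p /\ forall x, a < x < a + e -> f x = p x.
Proof.
  intros [_ [pts Hpf]]. destruct (list_gap_right pts a) as [e [He Hgap]].
  destruct (Hpf (Finite a) (Finite (a + e))) as [p [Hp Hfp]].
  - simpl. lra.
  - intros t Ht. simpl. apply Hgap, Ht.
  - exists e, p. split; [exact He | split; [exact Hp |]].
    intros x Hx. apply Hfp; simpl; lra.
Qed.

(** * Truncated powers *)

Lemma is_derive_shift_mult (g : R -> R) (t : R) :
  continuous g t -> is_derive (fun x => (x - t) * g x) t (g t).
Proof.
  intros Hg. apply is_derive_Reals. intros eps He.
  apply continuity_pt_filterlim in Hg.
  destruct (Hg eps He) as [d [Hd Hclose]].
  exists (mkposreal d Hd). intros h Hh0 Hh.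
  replace (((t + h - t) * g (t + h) - (t - t) * g t) / h - g t) with (g (t + h) - g t)
    by (field; exact Hh0).
  apply Hclose. split.
  - split; [exact I | intros E; apply Hh0; lra].
  - change (Rabs (t + h - t) < d). now replace (t + h - t) with h by ring.
Qed.

Definition trunc_pow (m : nat) (t x : R) : R := Rmax (x - t) 0 ^ m.

Lemma trunc_pow_le m t x : (1 <= m)%nat -> x <= t -> trunc_pow m t x = 0.
Proof. intros Hm Hx. unfold trunc_pow. rewrite Rmax_right by lra. apply pow_i. lia. Qed.

Lemma trunc_pow_ge m t x : t <= x -> trunc_pow m t x = (x - t) ^ m.
Proof. intros Hx. unfold trunc_pow. now rewrite Rmax_left by lra. Qed.

Lemma trunc_pow_S d t x : (1 <= d)%nat -> trunc_pow (S d) t x = (x - t) * trunc_pow d t x.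
Proof.
  intros Hd. destruct (Rle_dec x t) as [Hx | Hx].
  - rewrite !trunc_pow_le by (lia || lra). ring.
  - rewrite !trunc_pow_ge by lra. reflexivity.
Qed.

Lemma continuous_trunc_pow m t x : continuous (trunc_pow m t) x.
Proof.
  assert (Hmax : continuous (fun y => Rmax (y - t) 0) x).
  { apply continuous_ext with (fun y => / 2 * ((y - t) + Rabs (y - t))).
    - intros y. change (@eq R (/ 2 * ((y - t) + Rabs (y - t))) (Rmax (y - t) 0)).
      unfold Rmax. destruct (Rle_dec (y - t) 0).
      + rewrite Rabs_left1 by lra. field.
      + rewrite Rabs_right by lra. field.
    - assert (Hsub : continuous (fun y => y - t) x).
      { apply (continuous_minus (fun y : R => y) (fun _ => t)).
        - apply continuous_id.
        - apply continuous_const. }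
      apply (continuous_mult (fun _ => / 2) (fun y => (y - t) + Rabs (y - t))).
      + apply continuous_const.
      + apply (continuous_plus (fun y => y - t) (fun y => Rabs (y - t))); [exact Hsub |].
        now apply (continuous_Rabs_comp (fun y => y - t)). }
  induction m as [|m IH].
  - apply continuous_const.
  - apply (continuous_mult (fun y => Rmax (y - t) 0) (trunc_pow m t)); assumption.
Qed.

Lemma is_derive_trunc_pow d t x :
  (1 <= d)%nat -> is_derive (trunc_pow (S d) t) x (INR (S d) * trunc_pow d t x).
Proof.
  intros Hd. destruct (Rtotal_order x t) as [Hx | [<- | Hx]].
  - rewrite trunc_pow_le, Rmult_0_r by (lia || lra).
    apply is_derive_ext_loc with (fun _ => 0); [| apply (is_derive_const 0 x)].
    apply (filter_imp (fun y => y < t)); [| now apply locally_lt].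
    intros y Hy. symmetry. apply trunc_pow_le; lia || lra.
  - rewrite trunc_pow_le, Rmult_0_r by (lia || lra).
    rewrite <- (trunc_pow_le d x x Hd (Rle_refl x)).
    apply is_derive_ext with (fun y => (y - x) * trunc_pow d x y).
    + intros y. symmetry. now apply trunc_pow_S.
    + apply is_derive_shift_mult, continuous_trunc_pow.
  - rewrite trunc_pow_ge by lra.
    apply is_derive_ext_loc with (fun y => (y - t) ^ S d).
    + apply (filter_imp (fun y => t < y)); [| now apply locally_gt].
      intros y Hy. symmetry. apply trunc_pow_ge. lra.
    + auto_derive; [exact I | apply Rmult_1_l].
Qed.

Lemma Derive_n_trunc_pow m t j : (j < m)%nat -> exists c, forall x,
  ex_derive_n (trunc_pow m t) j x /\ Derive_n (trunc_pow m t) j x = c * trunc_pow (m - j) t x.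
Proof.
  induction j as [|j IH]; intros Hj.
  - exists 1. intros x. split; [exact I |]. simpl. rewrite Nat.sub_0_r. ring.
  - destruct (IH ltac:(lia)) as [c Hc].
    assert (HD : Derive_n (trunc_pow m t) j = fun y => c * trunc_pow (S (m - S j)) t y).
    { apply functional_extensionality. intros y.
      replace (S (m - S j)) with (m - j)%nat by lia. apply Hc. }
    assert (Hder : forall x, is_derive (Derive_n (trunc_pow m t) j) x
                     (c * (INR (S (m - S j)) * trunc_pow (m - S j) t x))).
    { intros x. rewrite HD. apply is_derive_scal, is_derive_trunc_pow. lia. }
    exists (c * INR (S (m - S j))). intros x. split.
    + eexists. apply Hder.
    + change (Derive (Derive_n (trunc_pow m t) j) x
              = c * INR (S (m - S j)) * trunc_pow (m - S j) t x).
      rewrite (is_derive_unique _ _ _ (Hder x)). ring.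
Qed.

Lemma spline_trunc_pow m t : (1 <= m)%nat -> spline m (trunc_pow m t).
Proof.
  intros Hm. split.
  - intros j Hj x. destruct (Derive_n_trunc_pow m t j ltac:(lia)) as [c Hc].
    split; [apply Hc |].
    apply continuous_ext with (fun y => c * trunc_pow (m - j) t y).
    + intros y. symmetry. apply Hc.
    + apply (continuous_mult (fun _ => c) (trunc_pow (m - j) t)).
      * apply continuous_const.
      * apply continuous_trunc_pow.
  - exists (t :: nil). intros a b _ Hpts.
    destruct (Rbar_interval_side a b t (Hpts t (or_introl eq_refl))) as [Hleft | Hright].
    + exists (fun _ => 0). split; [apply is_poly_le_const0 |].
      intros x _ Hx. apply trunc_pow_le; [exact Hm |]. now apply Rlt_le, Hleft.
    + exists (fun x => (x - t) ^ m). split; [apply is_poly_le_shifted_pow |].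
      intros x Hx _. apply trunc_pow_ge. now apply Rlt_le, Hright.
Qed.

Lemma smooth_at_trunc_pow m t x : (1 <= m)%nat -> x <> t -> smooth_at (trunc_pow m t) x.
Proof.
  intros Hm Hx. destruct (Rlt_dec x t) as [Hlt | Hge].
  - apply smooth_at_ext_loc with (fun _ => 0); [| apply (smooth_at_poly m), is_poly_le_const0].
    apply (filter_imp (fun y => y < t)); [| now apply locally_lt].
    intros y Hy. symmetry. apply trunc_pow_le; lia || lra.
  - apply smooth_at_ext_loc with (fun y => (y - t) ^ m);
      [| apply (smooth_at_poly m), is_poly_le_shifted_pow].
    apply (filter_imp (fun y => t < y)); [| apply locally_gt; lra].
    intros y Hy. symmetry. apply trunc_pow_ge. lra.
Qed.

(** * Polynomials in shifted powers *)

(* Eliminate the last node [z]: if [d] solves the system on the other nodes with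
   right-hand sides [e (S i) - z * e i], then [c j = d j / (y j - z)] together
   with [c (S N) = e 0 - sum c j] solves it on all of them. *)
Lemma vandermonde_solvable N (y e : nat -> R) :
  (forall j k, (j <= N)%nat -> (k <= N)%nat -> j <> k -> y j <> y k) ->
  exists c : nat -> R, forall i, (i <= N)%nat -> sum_f_R0 (fun j => c j * y j ^ i) N = e i.
Proof.
  revert e. induction N as [|N IH]; intros e Hy.
  - exists (fun _ => e 0%nat). intros i Hi. replace i with 0%nat by lia. simpl. ring.
  - set (z := y (S N)).
    destruct (IH (fun i => e (S i) - z * e i)) as [d Hd]; [intros j k Hj Hk; apply Hy; lia |].
    assert (Hz : forall j, (j <= N)%nat -> y j - z <> 0)
      by (intros j Hj E; apply (Hy j (S N)); unfold z in E; lra || lia).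
    set (c := fun j => if (j <=? N)%nat then d j / (y j - z)
                       else e 0%nat - sum_f_R0 (fun k => d k / (y k - z)) N).
    assert (Hc : forall j, (j <= N)%nat -> c j = d j / (y j - z))
      by (intros j Hj; unfold c; now rewrite (proj2 (Nat.leb_le j N) Hj)).
    assert (HcS : c (S N) = e 0%nat - sum_f_R0 (fun k => d k / (y k - z)) N)
      by (unfold c; now rewrite (proj2 (Nat.leb_gt (S N) N) (Nat.lt_succ_diag_r N))).
    exists c. induction i as [|i IHi]; intros Hi.
    + simpl sum_f_R0 at 1. rewrite HcS, (sum_eq _ (fun k => d k / (y k - z))); [simpl; ring |].
      intros j Hj. rewrite Hc by exact Hj. simpl. ring.
    + transitivity (sum_f_R0 (fun j => c j * y j ^ i * (y j - z)) (S N)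
                    + z * sum_f_R0 (fun j => c j * y j ^ i) (S N)).
      { rewrite scal_sum, <- plus_sum. apply sum_eq. intros j _. simpl. ring. }
      rewrite IHi by lia. simpl sum_f_R0 at 1. rewrite Rminus_diag, Rmult_0_r, Rplus_0_r.
      rewrite (sum_eq _ (fun j => d j * y j ^ i)).
      * rewrite Hd by lia. ring.
      * intros j Hj. rewrite Hc by exact Hj. field. now apply Hz.
Qed.

Lemma sum_f_R0_swap (F : nat -> nat -> R) M N :
  sum_f_R0 (fun j => sum_f_R0 (fun i => F i j) M) N =
  sum_f_R0 (fun i => sum_f_R0 (fun j => F i j) N) M.
Proof.
  induction N as [|N IH]; simpl.
  - reflexivity.
  - rewrite IH, <- plus_sum. reflexivity.
Qed.

(* Expanding [(x - t j) ^ m] binomially turns the coefficient matching into a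
   Vandermonde system in the nodes [- t j]. *)
Lemma is_poly_le_shifted_powers m p (t : nat -> R) :
  is_poly_le m p ->
  (forall j k, (j <= m)%nat -> (k <= m)%nat -> j <> k -> t j <> t k) ->
  exists c : nat -> R, forall x, p x = sum_f_R0 (fun j => c j * (x - t j) ^ m) m.
Proof.
  intros [b Hb] Ht.
  destruct (vandermonde_solvable m (fun j => - t j)
              (fun i => b (m - i)%nat / Binomial.C m (m - i))) as [c Hc].
  { intros j k Hj Hk Hjk E. apply (Ht j k Hj Hk Hjk). lra. }
  exists c. intros x.
  transitivity (sum_f_R0 (fun j => sum_f_R0 (fun i =>
      c j * (Binomial.C m i * x ^ i * (- t j) ^ (m - i))) m) m).
  2:{ apply sum_eq. intros j _. unfold Rminus. rewrite binomial, scal_sum.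
      apply sum_eq. intros; ring. }
  rewrite sum_f_R0_swap, Hb. apply sum_eq. intros i Hi.
  transitivity (Binomial.C m i * x ^ i * sum_f_R0 (fun j => c j * (- t j) ^ (m - i)) m).
  - rewrite Hc by lia. replace (m - (m - i))%nat with i by lia.
    assert (HC : 0 < Binomial.C m i).
    { unfold Binomial.C. apply Rdiv_lt_0_compat; [apply INR_fact_lt_0 |].
      apply Rmult_lt_0_compat; apply INR_fact_lt_0. }
    field. lra.
  - rewrite scal_sum. apply sum_eq. intros; ring.
Qed.

(** * Cutting off a spline *)

Lemma spline_cut_right m f a : (1 <= m)%nat -> spline m f -> exists g,
  spline m g /\ (forall x, x <= a -> g x = f x) /\ (forall x, a + INR m <= x -> g x = 0) /\
  (forall x, x < a -> smooth_at f x -> smooth_at g x) /\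
  (forall x, a < x -> (forall k, (1 <= k <= m)%nat -> x <> a + INR k) -> smooth_at g x).
Proof.
  intros Hm Hf.
  destruct (spline_right_piece m f a Hf) as [e [p [He [Hp Hfp]]]].
  destruct (is_poly_le_shifted_powers m p (fun j => a + INR j) Hp) as [c Hc].
  { intros j k _ _ Hjk E. apply Hjk, INR_eq. lra. }
  set (tail := fun x => sum_f_R0 (fun j => c j * trunc_pow m (a + INR j) x) m).
  assert (Htail_le : forall x, x <= a -> tail x = 0).
  { intros x Hx. unfold tail. rewrite (sum_eq _ (fun _ => 0)), sum_cte; [ring |].
    intros j _. rewrite trunc_pow_le; [ring | exact Hm |]. pose proof (pos_INR j). lra. }
  assert (Htail_ge : forall x, a + INR m <= x -> tail x = p x).
  { intros x Hx. rewrite Hc. apply sum_eq. intros j Hj.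
    rewrite trunc_pow_ge; [reflexivity |]. pose proof (le_INR _ _ Hj). lra. }
  assert (Hm_pos : 0 < INR m) by (apply lt_0_INR; lia).
  assert (Htail_smooth : forall x, (forall j, (j <= m)%nat -> x <> a + INR j) ->
                           smooth_at tail x).
  { intros x Hx. apply smooth_at_sum. intros j Hj.
    apply smooth_at_scal, smooth_at_trunc_pow; [exact Hm | now apply Hx]. }
  exists (fun x => glue a f p x - tail x). split; [| split; [| split; [| split]]].
  - apply spline_minus.
    + apply (spline_glue m a e); [exact He | exact Hfp | exact Hf | now apply spline_poly].
    + apply spline_sum. intros j _. now apply spline_scal, spline_trunc_pow.
  - intros x Hx. rewrite glue_le, Htail_le by exact Hx. ring.
  - intros x Hx. rewrite glue_gt, Htail_ge by lra. ring.
  - intros x Hx Hs. apply smooth_at_minus; [now apply smooth_at_glue_lt |].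
    apply Htail_smooth. intros j _. pose proof (pos_INR j). lra.
  - intros x Hx Hk. apply smooth_at_minus.
    + apply smooth_at_glue_gt; [exact Hx |]. now apply (smooth_at_poly m).
    + apply Htail_smooth. intros [|j] Hj; [simpl; lra |]. apply Hk. lia.
Qed.

Lemma spline_cut_left m f a : (1 <= m)%nat -> spline m f -> exists g,
  spline m g /\ (forall x, a <= x -> g x = f x) /\ (forall x, x <= a - INR m -> g x = 0) /\
  (forall x, a < x -> smooth_at f x -> smooth_at g x) /\
  (forall x, x < a -> (forall k, (1 <= k <= m)%nat -> x <> a - INR k) -> smooth_at g x).
Proof.
  intros Hm Hf.
  destruct (spline_cut_right m (fun x => f (- x)) (- a) Hm (spline_comp_opp m f Hf))
    as [g [Hg [Hgf [Hg0 [Hsm_lt Hsm_gt]]]]].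
  exists (fun x => g (- x)). split; [| split; [| split; [| split]]].
  - now apply spline_comp_opp.
  - intros x Hx. rewrite Hgf by lra. now rewrite Ropp_involutive.
  - intros x Hx. apply Hg0. lra.
  - intros x Hx Hs. apply smooth_at_comp_opp, Hsm_lt; [lra |].
    apply smooth_at_comp_opp. now rewrite Ropp_involutive.
  - intros x Hx Hk. apply smooth_at_comp_opp, Hsm_gt; [lra |].
    intros k Hk' E. apply (Hk k Hk'). lra.
Qed.

Lemma compactly_supported_of_vanishing f lo hi :
  (forall x, x <= lo -> f x = 0) -> (forall x, hi <= x -> f x = 0) -> compactly_supported f.
Proof.
  intros Hlo Hhi. exists (Rmax (Rabs lo) (Rabs hi)). intros x Hx.
  assert (H1 := Rmax_l (Rabs lo) (Rabs hi)). assert (H2 := Rmax_r (Rabs lo) (Rabs hi)).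
  assert (H3 := Rle_abs hi). assert (H4 := Rle_abs (- lo)). rewrite Rabs_Ropp in H4.
  destruct (Rle_dec 0 x).
  - rewrite (Rabs_right x) in Hx by lra. apply Hhi. lra.
  - rewrite (Rabs_left x) in Hx by lra. apply Hlo. lra.
Qed.

Lemma spline_cut m f a b : (1 <= m)%nat -> a <= b -> spline m f -> exists g,
  spline m g /\ compactly_supported g /\ (forall x, a <= x <= b -> g x = f x) /\
  (forall x, a < x < b -> smooth_at f x -> smooth_at g x) /\
  (forall x, x < a -> (forall k, (1 <= k <= m)%nat -> x <> a - INR k) -> smooth_at g x) /\
  (forall x, b < x -> (forall k, (1 <= k <= m)%nat -> x <> b + INR k) -> smooth_at g x).
Proof.
  intros Hm Hab Hf.
  destruct (spline_cut_right m f b Hm Hf) as [f1 [Hf1 [Hf1_f [Hf1_0 [Hf1_lt Hf1_gt]]]]].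
  destruct (spline_cut_left m f1 a Hm Hf1) as [g [Hg [Hg_f1 [Hg_0 [Hg_gt Hg_lt]]]]].
  assert (Hm_pos : 0 < INR m) by (apply lt_0_INR; lia).
  exists g. split; [exact Hg | split; [| split; [| split; [| split]]]].
  - apply (compactly_supported_of_vanishing g _ (b + INR m) Hg_0).
    intros x Hx. rewrite Hg_f1 by lra. now apply Hf1_0.
  - intros x [Ha Hb]. now rewrite Hg_f1, Hf1_f.
  - intros x [Ha Hb] Hs. now apply Hg_gt, Hf1_lt.
  - exact Hg_lt.
  - intros x Hb Hk. apply Hg_gt; [lra |]. now apply Hf1_gt.
Qed.

Lemma first_le_last (u : nat -> R) n :
  (forall i, (i < n)%nat -> u i < u (S i)) -> u 0%nat <= u n.
Proof.
  induction n as [|n IH]; intros H; [lra |].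
  assert (Hn := H n (Nat.lt_succ_diag_r n)).
  assert (IH' := IH (fun i Hi => H i (Nat.lt_lt_succ_r _ _ Hi))). lra.
Qed.

Theorem mainTheorem5 (m n : nat) (s : R -> R) (alpha : nat -> R) :
  (1 <= m)%nat ->
  spline m s ->
  (forall i : nat, (i < n)%nat -> alpha i < alpha (S i)) ->
  (forall x : R, knot s x <-> exists i : nat, (i <= n)%nat /\ x = alpha i) ->
  exists sbar : R -> R,
    spline m sbar /\ compactly_supported sbar /\
    (forall x : R, alpha 0%nat <= x <= alpha n -> sbar x = s x) /\
    (forall x : R, knot sbar x ->
       (exists k : nat, (1 <= k <= m)%nat /\ x = alpha 0%nat - INR k) \/
       (exists i : nat, (i <= n)%nat /\ x = alpha i) \/
       (exists k : nat, (1 <= k <= m)%nat /\ x = alpha n + INR k)).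
Proof.
  intros Hm Hs Hmono Hknot.
  destruct (spline_cut m s (alpha 0%nat) (alpha n) Hm (first_le_last alpha n Hmono) Hs)
    as [sbar [Hsbar [Hcs [Heq [Hmid [Hleft Hright]]]]]].
  exists sbar. split; [exact Hsbar | split; [exact Hcs | split; [exact Heq |]]].
  intros x Hx. apply NNPP. intros Hout. apply Hx.
  assert (Hknots : forall i, (i <= n)%nat -> x <> alpha i)
    by (intros i Hi E; apply Hout; right; left; now exists i).
  destruct (Rtotal_order x (alpha 0%nat)) as [H0 | [H0 | H0]];
    [| now destruct (Hknots 0%nat (Nat.le_0_l n) H0) |].
  - apply Hleft; [exact H0 |]. intros k Hk E. apply Hout. left. now exists k.
  - destruct (Rtotal_order x (alpha n)) as [Hn | [Hn | Hn]];
      [| now destruct (Hknots n (le_n n) Hn) |].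
    + apply Hmid; [lra |]. apply NNPP. intros Hsing.
      destruct (proj1 (Hknot x) Hsing) as [i [Hi E]]. exact (Hknots i Hi E).
    + apply Hright; [exact Hn |]. intros k Hk E. apply Hout. right. right. now exists k.
Qed.
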